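(* Let $n\in\mathbb Z^+$, let $d,d'$ be cyclotomic patterns of index $n$, let $p$ be a prime with $p\equiv1\pmod n$, and let $f,g$ be the periodic sequences of length $p$ from $d$ and $d'$. Then $P_{f,g}(0)=\frac{p-1}{n}\langle d,d'\rangle=(p-1)\langle\hat d,\hat{d'}\rangle$, and for every $u\in\mathbb Z$, \[P_{f,g}(\alpha_p^u)=\sum_{j,k\in\mathbb Z/n\mathbb Z}(k,j)\,d_{j+u}\overline{d'_{k+u}}.\]
   Context: For each prime $p$, $\alpha_p$ is a fixed primitive element of $\mathbb F_p$ and, for $n\mid p-1$, $\mathbb F_p^{*n}$ is the subgroup of $n$th powers, with classes $\alpha_p^k\mathbb F_p^{*n}$ ($k\in\mathbb Z/n\mathbb Z$). The cyclotomic number $(j,k)$ over $\mathbb F_p$ is $|(1+\alpha_p^j\mathbb F_p^{*n})\cap\alpha_p^k\mathbb F_p^{*n}|$, where $1+S=\{1+b:b\in S\}$. A cyclotomic pattern of index $n$ is $d:\mathbb Z/n\mathbb Z\to\mathbb C$; the periodic sequence of length $p$ from $d$ has $f_0=0$, $f_h=d_k$ for $h\in\alpha_p^k\mathbb F_p^{*n}$. $P_{f,g}(s)=\sum_{j\in\mathbb Z/p\mathbb Z}f_{j+s}\overline{g_j}$. $\langle a,b\rangle=\sum a_j\overline{b_j}$, $\hat a_j=n^{-1}\sum_k\exp(-2\pi ijk/n)a_k$. *)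

From HB Require Import structures.
From mathcomp Require Import all_boot all_order all_algebra all_field.
From mathcomp Require Import complex.
From mathcomp Require Import reals trigo.
Set Implicit Arguments. Unset Strict Implicit. Unset Printing Implicit Defensive.
Import Order.TTheory GRing.Theory Num.Theory.
Local Open Scope ring_scope.

(* Throughout, the index n of the paper is written m.+1 (so n >= 1 holds by
   construction and Z/nZ is the zmodType 'I_m.+1). *)

Definition zn (m : nat) (u : int) : 'I_m.+1 := inord `|(u %% (m.+1)%:Z)%Z|%N.

Definition cyc_class (p n : nat) (alpha : 'F_p) (k : nat) : {set 'F_p} :=
  [set alpha ^+ k * b ^+ n | b in [set b : 'F_p | b != 0]].

Definition cyc_number (p m : nat) (alpha : 'F_p) (j k : 'I_m.+1) : nat :=
  #|[set 1 + x | x in cyc_class m.+1 alpha j] :&: cyc_class m.+1 alpha k|.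

Definition pattern_seq (R : rcfType) (p m : nat) (alpha : 'F_p)
    (d : 'I_m.+1 -> R[i]) (h : 'F_p) : R[i] :=
  if h == 0 then 0 else
  match [pick k : 'I_m.+1 | h \in cyc_class m.+1 alpha k] with
  | Some k => d k
  | None => 0
  end.

Definition crosscorr (R : rcfType) (p : nat) (f g : 'F_p -> R[i]) (s : 'F_p)
    : R[i] := \sum_(j : 'F_p) f (j + s) * (g j)^*.

Definition inner (R : rcfType) (m : nat) (a b : 'I_m.+1 -> R[i]) : R[i] :=
  \sum_(j : 'I_m.+1) a j * (b j)^*.

Definition omega (R : realType) (n : nat) : R[i] :=
  Complex (cos (2 * pi / n%:R)) (- sin (2 * pi / n%:R)).

Definition dft (R : realType) (m : nat) (a : 'I_m.+1 -> R[i]) (j : 'I_m.+1)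
    : R[i] := (m.+1)%:R^-1 * \sum_(k : 'I_m.+1) omega R m.+1 ^+ (j * k) * a k.

From HB Require Import structures.
From mathcomp Require Import all_boot all_order all_algebra all_field.
From mathcomp Require Import complex.
From mathcomp Require Import reals trigo ring lra.
Set Implicit Arguments.
Unset Strict Implicit.
Unset Printing Implicit Defensive.
Import Order.TTheory GRing.Theory Num.Theory.
Local Open Scope ring_scope.

(* Every nonzero x in F_p is alpha^e for a unique e < p - 1, and x lies in the
   cyclotomic class of index e mod n.  At shift 0 each class therefore
   contributes (p - 1)/n copies of d_k conj(d'_k), and the DFT form of this is
   Parseval's identity for the primitive n-th root exp(-2 pi i/n).  At shift
   alpha^u, substituting alpha^u y for the summation variable turns the shifted
   argument into alpha^u (1 + y), which moves both class indices by u; grouping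
   the y by the classes of 1 + y and y counts exactly the cyclotomic numbers. *)

Lemma exprz_mod (F : fieldType) (x : F) (N : nat) (u : int) : (0 < N)%N ->
  x != 0 -> x ^+ N = 1 -> x ^ u = x ^+ `|(u %% N%:Z)%Z|.
Proof.
move=> N_gt0 x_neq0 xN1.
have modN_ge0 : 0 <= (u %% N%:Z)%Z by rewrite modz_ge0 ?eqz_nat -?lt0n.
rewrite {1}(divz_eq u N) expfzDr // -exprz_exp exprzAC.
by rewrite -[x ^ N%:Z]/(x ^+ N) xN1 exp1rz mul1r -{1}(gez0_abs modN_ge0).
Qed.

Lemma abs_modz_dvd (u : int) (n N : nat) : (0 < N)%N -> (n %| N)%N ->
  (`|(u %% N%:Z)%Z| %% n)%N = `|(u %% n%:Z)%Z|%N.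
Proof.
move=> N_gt0 n_dvd_N.
have modN_ge0 : 0 <= (u %% N%:Z)%Z by rewrite modz_ge0 ?eqz_nat -?lt0n.
have -> : (u %% n%:Z)%Z = ((u %% N%:Z)%Z %% n%:Z)%Z.
  by rewrite {1}(divz_eq u N) -(divnK n_dvd_N) PoszM mulrA modzMDl.
by rewrite -(gez0_abs modN_ge0) modz_nat absz_nat.
Qed.

Lemma sum_nat_modn (V : nmodType) (q n : nat) (F : nat -> V) :
  \sum_(0 <= e < q * n) F (e %% n)%N = (\sum_(0 <= k < n) F k) *+ q.
Proof.
elim: q => [|q IHq]; first by rewrite mul0n big_geq.
rewrite mulSnr (@big_cat_nat _ _ _ (q * n)) ?leq_addr // IHq mulrSr; congr (_ + _).
rewrite -{1}[(q * n)%N]add0n big_addn addKn; apply: eq_big_nat => k /andP[_ lt_kn].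
by rewrite addnC modnMDl modn_small.
Qed.

Lemma sum_partition2 (V : nmodType) (T I J : finType) (P : pred T)
    (phi : T -> I) (psi : T -> J) (G : I -> J -> V) :
  \sum_(y | P y) G (phi y) (psi y) =
  \sum_(i : I) \sum_(j : J) G i j *+ #|[set y | P y & (phi y == i) && (psi y == j)]|.
Proof.
rewrite pair_big (partition_big (fun y => (phi y, psi y)) xpredT) //=.
apply: eq_bigr => -[i j] _; rewrite -sumr_const.
by apply: eq_big => [y | y /andP[_ /eqP[-> ->]]]; rewrite // !inE xpair_eqE.
Qed.

Section CyclotomicClasses.
Variables (p m : nat) (alpha : 'F_p).
Hypotheses (p_prime : prime p) (n_dvd_N : (m.+1 %| p.-1)%N).
Hypothesis alpha_prim : (p.-1).-primitive_root alpha.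

Local Notation N := p.-1.
Local Notation n := m.+1.

Lemma N_gt0 : (0 < N)%N.
Proof. exact: prim_order_gt0 alpha_prim. Qed.

Lemma alpha_neq0 : alpha != 0.
Proof. by rewrite (prim_root_eq0 alpha_prim) -lt0n N_gt0. Qed.

Lemma alpha_expr_inj : injective (fun e : 'I_N => alpha ^+ e).
Proof.
move=> i j /eqP; rewrite (eq_prim_root_expr alpha_prim) !modn_small //.
by move/eqP/val_inj.
Qed.

Lemma alpha_powersE : [set alpha ^+ (e : 'I_N) | e in 'I_N] = [set~ 0].
Proof.
apply/eqP; rewrite eqEcard card_imset; last exact: alpha_expr_inj.
rewrite card_ord cardsC1 card_Fp // leqnn andbT.
by apply/subsetP => _ /imsetP[e _ ->]; rewrite !inE expf_neq0 ?alpha_neq0.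
Qed.

Lemma sum_Fp_nonzero (V : nmodType) (h : 'F_p -> V) :
  \sum_(x | x != 0) h x = \sum_(e < N) h (alpha ^+ e).
Proof.
have -> : \sum_(x | x != 0) h x = \sum_(x in [set~ 0]) h x.
  by apply: eq_bigl => x; rewrite !inE.
rewrite -alpha_powersE big_imset //; exact: in2W alpha_expr_inj.
Qed.

Definition dlog (x : 'F_p) : nat :=
  if [pick e : 'I_N | alpha ^+ e == x] is Some e then e else 0%N.

Lemma dlog_lt x : (dlog x < N)%N.
Proof.
by rewrite /dlog; case: pickP => [e _|_]; [exact: ltn_ord | exact: N_gt0].
Qed.

Lemma dlogK x : x != 0 -> alpha ^+ dlog x = x.
Proof.
move=> x_neq0; rewrite /dlog; case: pickP => [e /eqP //|no_log].
have : x \in [set~ 0] by rewrite !inE.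
by rewrite -alpha_powersE => /imsetP[e _ xE]; have := no_log e; rewrite xE eqxx.
Qed.

Lemma dlog_expr e : dlog (alpha ^+ e) = (e %% N)%N.
Proof.
have /eqP := dlogK (expf_neq0 e alpha_neq0).
by rewrite (eq_prim_root_expr alpha_prim) (modn_small (dlog_lt _)) => /eqP.
Qed.

Definition cyc_index (x : 'F_p) : 'I_n := inord (dlog x %% n).

Lemma cyc_index_expr e : cyc_index (alpha ^+ e) = inord (e %% n).
Proof. by rewrite /cyc_index dlog_expr (modn_dvdm _ n_dvd_N). Qed.

Lemma mem_cyc_class x (k : 'I_n) :
  (x \in cyc_class n alpha k) = (x != 0) && (cyc_index x == k).
Proof.
apply/imsetP/andP => [[b] | [x_neq0 /eqP <-]].
  rewrite inE => b_neq0 ->.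
  split; first by rewrite mulf_neq0 ?expf_neq0 ?alpha_neq0.
  rewrite -(dlogK b_neq0) -exprM -exprD cyc_index_expr; apply/eqP/val_inj.
  by rewrite /= inordK ?ltn_mod // addnC modnMDl modn_small.
exists (alpha ^+ (dlog x %/ n)); first by rewrite inE expf_neq0 ?alpha_neq0.
by rewrite -exprM -exprD /cyc_index inordK ?ltn_mod // addnC -divn_eq dlogK.
Qed.

Lemma pattern_seqE (R : rcfType) (d : 'I_n -> R[i]) x :
  pattern_seq alpha d x = if x == 0 then 0 else d (cyc_index x).
Proof.
rewrite /pattern_seq; have [//|x_neq0] := eqVneq x 0.
case: pickP => [k | no_class]; first by rewrite mem_cyc_class x_neq0 => /eqP ->.
by have := no_class (cyc_index x); rewrite mem_cyc_class x_neq0 eqxx.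
Qed.

Lemma cyc_index_mulz u z :
  z != 0 -> cyc_index (alpha ^ u * z) = cyc_index z + zn m u.
Proof.
move=> z_neq0; rewrite (exprz_mod _ N_gt0 alpha_neq0 (prim_expr_order alpha_prim)).
rewrite -{1}(dlogK z_neq0) -exprD cyc_index_expr; apply/val_inj.
rewrite /= /cyc_index /zn -(abs_modz_dvd _ N_gt0 n_dvd_N) !inordK ?ltn_mod //.
by rewrite modnDm addnC.
Qed.

Lemma sum_cyc_index (V : nmodType) (F : 'I_n -> V) :
  \sum_(x | x != 0) F (cyc_index x) = (\sum_(k < n) F k) *+ (N %/ n).
Proof.
rewrite sum_Fp_nonzero; under eq_bigr => e _ do rewrite cyc_index_expr.
rewrite -(big_mkord xpredT (fun e => F (inord (e %% n)))) -{1}(divnK n_dvd_N).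
rewrite (sum_nat_modn _ _ (fun k => F (inord k))) big_mkord; congr (_ *+ _).
by apply: eq_bigr => k _; rewrite inord_val.
Qed.

Lemma cyc_numberE (j k : 'I_n) : cyc_number alpha j k =
  #|[set y | (y != 0) && (1 + y != 0) &
              (cyc_index (1 + y) == k) && (cyc_index y == j)]|.
Proof.
rewrite /cyc_number -[in RHS](card_imset _ (addrI 1)); apply: eq_card => z.
rewrite !inE mem_cyc_class; apply/andP/imsetP => [[/imsetP[y y_j ->] z_k] | [y]].
  exists y => //; move: y_j z_k; rewrite !inE !mem_cyc_class.
  by case/andP=> -> -> /andP[-> ->].
rewrite inE => /andP[/andP[y_neq0 z_neq0] /andP[z_k y_j]] ->.
split; last by rewrite z_neq0.
by apply/imsetP; exists y; rewrite // mem_cyc_class y_neq0.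
Qed.

Lemma crosscorr_pattern0 (R : rcfType) (d d' : 'I_n -> R[i]) :
  crosscorr (pattern_seq alpha d) (pattern_seq alpha d') 0 = inner d d' *+ (N %/ n).
Proof.
rewrite /crosscorr /inner -sum_cyc_index (bigID (fun x => x == 0)) /=.
rewrite big1 ?add0r => [|x /eqP ->]; last by rewrite addr0 pattern_seqE eqxx mul0r.
by apply: eq_bigr => x x_neq0; rewrite addr0 !pattern_seqE (negbTE x_neq0).
Qed.

Lemma crosscorr_pattern_exprz (R : rcfType) (d d' : 'I_n -> R[i]) (u : int) :
  crosscorr (pattern_seq alpha d) (pattern_seq alpha d') (alpha ^ u) =
  \sum_(j < n) \sum_(k < n)
    (cyc_number alpha k j)%:R * d (j + zn m u) * (d' (k + zn m u))^*.
Proof.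
set a := alpha ^ u; have a_neq0 : a != 0 by rewrite expfz_neq0 ?alpha_neq0.
rewrite /crosscorr (reindex_inj (mulfI a_neq0)) /=.
transitivity (\sum_(y | (y != 0) && (1 + y != 0))
  d (cyc_index (1 + y) + zn m u) * (d' (cyc_index y + zn m u))^*).
  rewrite [RHS]big_mkcond; apply: eq_bigr => y _.
  have -> : a * y + a = a * (1 + y) by rewrite mulrDr mulr1 addrC.
  rewrite !pattern_seqE !mulf_eq0 (negbTE a_neq0) /=.
  have [->|y_neq0] := eqVneq y 0; first by rewrite rmorph0 mulr0.
  have [->|y1_neq0] := eqVneq (1 + y) 0; first by rewrite mul0r.
  by rewrite !cyc_index_mulz.
rewrite (sum_partition2 _ (fun y => cyc_index (1 + y)) cyc_index
  (fun j k => d (j + zn m u) * (d' (k + zn m u))^*)).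
apply: eq_bigr => j _; apply: eq_bigr => k _.
by rewrite cyc_numberE -mulrA mulr_natl.
Qed.

End CyclotomicClasses.

Section PrimRootOrthogonality.
Variables (C : numClosedFieldType) (n : nat) (w : C).
Hypothesis w_prim : n.-primitive_root w.

Lemma prim_root_conj : w^* = w^-1.
Proof.
have n_gt0 := prim_order_gt0 w_prim.
have w_norm : `|w| = 1.
  by apply/eqP; rewrite -(pexpr_eq1 n_gt0) // -normrX prim_expr_order ?normr1.
by rewrite invC_norm w_norm expr1n invr1 mul1r.
Qed.

Lemma prim_root_orthogonal (k l : nat) : (k < n)%N -> (l < n)%N ->
  \sum_(j < n) w ^+ (j * k) * (w ^+ (j * l))^* = n%:R * (k == l)%:R.
Proof.
move=> lt_kn lt_ln.
have w_neq0 : w != 0 by rewrite (prim_root_eq0 w_prim) -lt0n (prim_order_gt0 w_prim).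
set t := w ^+ k / w ^+ l.
have termE (j : 'I_n) : w ^+ (j * k) * (w ^+ (j * l))^* = t ^+ j.
  rewrite rmorphXn /= prim_root_conj exprVn.
  by rewrite exprMn exprVn -!exprM mulnC [(l * j)%N]mulnC.
under eq_bigr => j _ do rewrite termE.
have [eq_kl|neq_kl] := eqVneq k l.
  rewrite /t eq_kl divff ?expf_neq0 // mulr1.
  by under eq_bigr => j _ do rewrite expr1n; rewrite sumr_const card_ord.
have t_neq1 : t != 1.
  apply: contra neq_kl => /eqP/divr1_eq/eqP.
  by rewrite (eq_prim_root_expr w_prim) !modn_small.
have tn : t ^+ n = 1.
  rewrite /t exprMn exprVn -!exprM !(mulnC _ n) !exprM (prim_expr_order w_prim).
  by rewrite !expr1n invr1 mulr1.
have := subrX1 t n; rewrite tn subrr => /esym/eqP.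
by rewrite mulf_eq0 subr_eq0 (negbTE t_neq1) mulr0 => /eqP.
Qed.

Lemma prim_root_parseval (a b : 'I_n -> C) :
  \sum_(j < n) (\sum_(k < n) w ^+ (j * k) * a k) *
                (\sum_(l < n) w ^+ (j * l) * b l)^* =
  n%:R * \sum_(k < n) a k * (b k)^*.
Proof.
have expand (j : 'I_n) :
    (\sum_(k < n) w ^+ (j * k) * a k) * (\sum_(l < n) w ^+ (j * l) * b l)^* =
    \sum_(k < n) \sum_(l < n) a k * (b l)^* * (w ^+ (j * k) * (w ^+ (j * l))^*).
  rewrite rmorph_sum mulr_suml; apply: eq_bigr => k _.
  rewrite mulr_sumr; apply: eq_bigr => l _.
  by rewrite rmorphM /= mulrACA mulrC.
under eq_bigr => j _ do rewrite expand.
rewrite exchange_big mulr_sumr; apply: eq_bigr => k _.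
rewrite exchange_big.
under eq_bigr => l _ do rewrite -mulr_sumr prim_root_orthogonal //.
rewrite (bigD1 k) //= eqxx mulr1 mulrC [X in _ + X]big1 ?addr0 // => l neq_lk.
by rewrite (inj_eq val_inj) eq_sym (negbTE neq_lk) !mulr0.
Qed.

End PrimRootOrthogonality.

Lemma cos_lt1 (R : realType) (x : R) : 0 < x < pi *+ 2 -> cos x < 1.
Proof.
move=> /andP[x_gt0 x_lt2pi].
have -> : x = (x / 2) *+ 2 by rewrite -mulr_natr mulfVK // pnatr_eq0.
have sin_gt0 : 0 < sin (x / 2).
  by apply: sin_gt0_pi; rewrite divr_gt0 //= ltr_pdivrMr // mulr_natr.
have := exprn_gt0 2 sin_gt0; rewrite cos_mulr2n cos2sin2 mulrnBl mulr2n.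
set s := sin _ ^+ 2; lra.
Qed.

Section Omega.
Variables (R : realType) (n : nat).
Hypothesis n_gt0 : (0 < n)%N.

Let theta : R := 2 * pi / n%:R.

Lemma omega_expn k :
  omega R n ^+ k = Complex (cos (k%:R * theta)) (- sin (k%:R * theta)).
Proof.
elim: k => [|k IHk]; first by rewrite expr0 mul0r cos0 sin0 oppr0.
rewrite exprS IHk /omega -/theta -[(_ +i* _)%C * (_ +i* _)%C]/(_ +i* _)%C.
by rewrite -addn1 natrD mulrDl mul1r cosD sinD; congr Complex; ring.
Qed.

Lemma omega_prim : n.-primitive_root (omega R n).
Proof.
rewrite /primitive_root_of_unity n_gt0; apply/forallP => i /=.
rewrite unity_rootE omega_expn.
have n_pos : (0 : R) < n%:R by rewrite ltr0n.
have [eq_in|neq_in] := eqVneq i.+1 n.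
  rewrite eq_in /theta mulrCA (mulfV (lt0r_neq0 n_pos)) mulr1 mulr_natl.
  by rewrite cos2pi sin2pi oppr0 eqxx.
rewrite eqbF_neg; apply/eqP => /(congr1 (@complex.Re _)) /= cos_eq1.
suff : cos (i.+1%:R * theta) < 1 by rewrite cos_eq1 ltxx.
apply: cos_lt1; rewrite /theta; apply/andP; split.
  by rewrite mulr_gt0 ?divr_gt0 ?mulr_gt0 ?pi_gt0 ?ltr0n.
rewrite mulrA ltr_pdivrMr // -(mulr_natl pi 2) [X in _ < X]mulrC.
by rewrite ltr_pM2r ?mulr_gt0 ?pi_gt0 // ltr_nat ltn_neqAle neq_in ltn_ord.
Qed.

End Omega.

Lemma inner_dft (R : realType) (m : nat) (a b : 'I_m.+1 -> R[i]) :
  inner (dft a) (dft b) = (m.+1)%:R^-1 * inner a b.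
Proof.
rewrite /inner /dft.
under eq_bigr => j _ do rewrite rmorphM /= fmorphV rmorph_nat mulrACA.
rewrite -mulr_sumr prim_root_parseval ?omega_prim // mulrA.
by rewrite -[X in X * _]mulrA mulVf ?pnatr_eq0 // mulr1.
Qed.

Theorem mainTheorem18 (R : realType) (m : nat) (d d' : 'I_m.+1 -> R[i])
    (p : nat) (p_prime : prime p) (p_mod : (p = 1 %[mod m.+1])%N)
    (alpha : 'F_p) (alpha_prim : (p.-1)%N.-primitive_root alpha) :
  let f := pattern_seq alpha d in
  let g := pattern_seq alpha d' in
  crosscorr f g 0 = ((p.-1)%:R / (m.+1)%:R) * inner d d' /\
  crosscorr f g 0 = (p.-1)%:R * inner (dft d) (dft d') /\
  forall u : int,
    crosscorr f g (alpha ^ u) =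
    \sum_(j : 'I_m.+1) \sum_(k : 'I_m.+1)
      (cyc_number alpha k j)%:R * d (j + zn m u) * (d' (k + zn m u))^*.
Proof.
move=> f g.
have n_dvd_N : (m.+1 %| p.-1)%N by rewrite -subn1 -eqn_mod_dvd ?prime_gt0 ?p_mod.
have corr0 : crosscorr f g 0 = ((p.-1)%:R / (m.+1)%:R) * inner d d'.
  by rewrite crosscorr_pattern0 // -[LHS]mulr_natl natf_div.
split; first exact: corr0.
split; first by rewrite corr0 inner_dft mulrA.
exact: crosscorr_pattern_exprz.
Qed.
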